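(* $\mathrm{rk}(|\Phi^3\rangle)=7$, where $|\Phi^3\rangle=|\Phi\rangle_{AB}|\Phi\rangle_{AC}|\Phi\rangle_{BC}$ with $|\Phi\rangle=|00\rangle+|11\rangle$, viewed as a tripartite tensor in $(\mathbb{C}^2\otimes\mathbb{C}^2)_A\otimes(\mathbb{C}^2\otimes\mathbb{C}^2)_B\otimes(\mathbb{C}^2\otimes\mathbb{C}^2)_C$ (party $A$ holds one qubit of the $AB$ pair and one of the $AC$ pair, and similarly for $B$ and $C$).
   Context: The tensor rank $\mathrm{rk}(|\phi\rangle)$ of $|\phi\rangle\in H_A\otimes H_B\otimes H_C$ is the minimum $r$ such that $|\phi\rangle=\sum_{j=1}^r|a_j\rangle|b_j\rangle|c_j\rangle$ with $|a_j\rangle\in H_A,|b_j\rangle\in H_B,|c_j\rangle\in H_C$. *)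

From mathcomp Require Import all_boot all_algebra.
From mathcomp Require Import Rstruct complex.
Set Implicit Arguments.
Unset Strict Implicit.
Unset Printing Implicit Defensive.
Import GRing.Theory.
Local Open Scope ring_scope.

Definition C : numClosedFieldType := (Rdefinitions.R)[i].

Definition tensor3 (F : Type) (IA IB IC : finType) := IA -> IB -> IC -> F.

Definition has_decomp (F : fieldType) (IA IB IC : finType)
    (T : tensor3 F IA IB IC) (r : nat) : Prop :=
  exists (a : 'I_r -> IA -> F) (b : 'I_r -> IB -> F) (c : 'I_r -> IC -> F),
    forall x y z, T x y z = \sum_(j < r) a j x * b j y * c j z.

Definition tensor_rank_is (F : fieldType) (IA IB IC : finType)
    (T : tensor3 F IA IB IC) (r : nat) : Prop :=
  has_decomp T r /\ (forall r', has_decomp T r' -> (r <= r')%N).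

(* A = (A1, A2) with A1 paired with B, A2 paired with C;
   B = (B1, B2) with B1 paired with A, B2 paired with C;
   C = (C1, C2) with C1 paired with A, C2 paired with B. *)
Definition qq := ('I_2 * 'I_2)%type.

Definition Phi (u v : 'I_2) : C := if u == v then 1 else 0.

Definition Phi3 : tensor3 C qq qq qq :=
  fun a b c => Phi a.1 b.1 * Phi a.2 c.1 * Phi b.2 c.2.

(* Phi^3 is the structure tensor of 2x2 matrix multiplication: contracting it
   with X, Y, Z gives tr (X Y Z), so a decomposition of length r is an identity
   tr (X Y Z) = sum_j tr (U_j X) tr (V_j Y) tr (W_j Z), and Strassen's algorithm
   gives one of length 7.  Conversely, if r <= 6, pick i <> j with V_i U_j <> 0
   and restrict to the hyperplanes tr (U_j X) = 0 and tr (V_i Y) = 0: at most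
   four terms survive.  On these hyperplanes tr (X Y Z) vanishes identically
   only for Z = 0, so the surviving forms tr (W_k _) are a basis of the dual
   space.  On the line where all but one of them vanish, the restricted form is
   a rank-one bilinear form in (X, Y), and its vanishing 2x2 minors force
   tr (adj (V_i U_j) Z) = 0.  Hence adj (V_i U_j) = 0, a contradiction. *)

From mathcomp Require Import all_boot all_algebra.
From mathcomp Require Import Rstruct complex.
From mathcomp Require Import ring.
Import GRing.Theory.

Set Implicit Arguments.
Unset Strict Implicit.
Unset Printing Implicit Defensive.
Local Open Scope ring_scope.

Section LinearAlgebra.
Variable F : fieldType.

Lemma mulmx_cover_eq0 m n k (M : 'M[F]_(m, n)) (N : 'M[F]_(m, k)) :
  (forall u : 'rV_m, u *m M = 0 \/ u *m N = 0) -> M = 0 \/ N = 0.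
Proof.
move=> cover.
have [-> | nzM] := eqVneq M 0; first by left.
have [-> | nzN] := eqVneq N 0; first by right.
have nz_mul p (L : 'M[F]_(m, p)) : L != 0 -> exists u : 'rV_m, u *m L != 0.
  move=> nzL; case/boolP: [exists i, row i L != 0] => [/existsP[i iL] | /existsPn rowL].
    by exists (delta_mx 0 i); rewrite -rowE.
  by case/eqP: nzL; apply/row_matrixP => i; rewrite row0; apply/eqP/negPn/rowL.
have [u uM] := nz_mul _ M nzM.
have [v vN] := nz_mul _ N nzN.
have uN : u *m N = 0 by case: (cover u) => // /eqP; rewrite (negbTE uM).
have vM : v *m M = 0 by case: (cover v) => // /eqP; rewrite (negbTE vN).
by case: (cover (u + v)) => /eqP;
  rewrite mulmxDl ?uN ?vM ?addr0 ?add0r ?(negbTE uM) ?(negbTE vN).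
Qed.

Lemma mx11_eq0 (x : 'M[F]_1) : x 0 0 = 0 -> x = 0.
Proof. by move=> x0; rewrite [x]mx11_scalar x0 raddf0. Qed.

Lemma bilinear_mul_eq0 m n (M N : 'M[F]_(m, n)) :
  (forall (u : 'rV_m) (v : 'rV_n), (u *m M *m v^T) 0 0 * (u *m N *m v^T) 0 0 = 0) ->
  M = 0 \/ N = 0.
Proof.
move=> H; apply: mulmx_cover_eq0 => u.
have [uM | uN] : (u *m M)^T = 0 \/ (u *m N)^T = 0.
  apply: mulmx_cover_eq0 => v.
  have /eqP := H u v; rewrite mulf_eq0 => /orP[] /eqP /mx11_eq0 uv0;
    [left | right]; by rewrite -[v]trmxK -trmx_mul uv0 trmx0.
- by left; rewrite -[u *m M]trmxK uM trmx0.
- by right; rewrite -[u *m N]trmxK uN trmx0.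
Qed.

Lemma mxtrace_mul_eq0 n (X : 'M[F]_n) : (forall Y, \tr (X *m Y) = 0) -> X = 0.
Proof.
move=> H; apply/matrixP => i j; rewrite mxE -(H (delta_mx j i)).
rewrite /mxtrace (bigD1 i) //= big1 => [|k ki]; rewrite mxE.
  rewrite (bigD1 j) //= big1 => [|l lj]; first by rewrite !mxE !eqxx mulr1 !addr0.
  by rewrite mxE (negbTE lj) mulr0.
by rewrite big1 // => l _; rewrite mxE (negbTE ki) andbF mulr0.
Qed.

Lemma mxtrace_mul_mxvec m n (G : 'M[F]_(m, n)) (Z : 'M[F]_(n, m)) :
  \tr (G *m Z) = (mxvec Z *m (mxvec G^T)^T) 0 0.
Proof.
rewrite mxtrace_mulC /mxtrace mxE (reindex _ (curry_mxvec_bij _ _)) /=.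
rewrite (eq_bigr (fun i => \sum_j Z i j * G j i)) => [|i _]; last by rewrite mxE.
by rewrite pair_bigA; apply: eq_bigr => -[i j] _; rewrite !mxE !mxvecE mxE.
Qed.

(* The rows of [G^-1] form the dual basis of the columns of [G]; [l] vanishes
   on each of them. *)
Lemma form_eq0_on_dual_lines n (G : 'M[F]_n) (l : 'cV[F]_n) :
  (forall v : 'rV_n, v *m G = 0 -> v = 0) ->
  (forall (k : 'I_n) (v : 'rV_n), (forall j, j != k -> (v *m G) 0 j = 0) -> v *m l = 0) ->
  l = 0.
Proof.
move=> injG H.
have Gu : G \in unitmx by rewrite -row_free_unit; apply: inj_row_free.
have dual_l : invmx G *m l = 0.
  apply/row_matrixP => k; rewrite row0 rowE mulmxA; apply: (H k) => j jk.
  by rewrite mulmxKV // mxE eqxx (negbTE jk).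
by rewrite -(mulKVmx Gu l) dual_l mulmx0.
Qed.

End LinearAlgebra.

Lemma big_enum_pad (R : nmodType) (T : finType) (P : {pred T}) (x0 : T) m (f : T -> R) :
  (#|P| <= m)%N ->
  \sum_(k in P) f k = \sum_(t < m) if (t < #|P|)%N then f (nth x0 (enum P) t) else 0.
Proof.
move=> Pm; rewrite -big_enum (big_nth x0) big_mkord -cardE.
by rewrite (big_ord_widen m (fun t => f (nth x0 (enum P) t)) Pm) big_mkcond.
Qed.

Section TwoByTwo.
Variable F : fieldType.

Definition mx2 (a b c d : F) : 'M[F]_2 :=
  \matrix_(i, j) if i == 0 :> nat then (if j == 0 :> nat then a else b)
                 else if j == 0 :> nat then c else d.

Definition rv2 (x y : F) : 'rV[F]_2 := \row_j if j == 0 :> nat then x else y.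

Lemma mx2E (M : 'M[F]_2) : M = mx2 (M 0 0) (M 0 1) (M 1 0) (M 1 1).
Proof.
apply/matrixP => i j; rewrite mxE.
by case: i j => [[|[|//]] ?] [[|[|//]] ?] /=; congr (M _ _); apply: val_inj.
Qed.

Lemma rv2E (u : 'rV[F]_2) : u = rv2 (u 0 0) (u 0 1).
Proof.
apply/matrixP => i j; rewrite mxE ord1.
by case: j => [[|[|//]] ?] /=; congr (u _ _); apply: val_inj.
Qed.

Lemma mulmx2 a b c d a' b' c' d' : mx2 a b c d *m mx2 a' b' c' d' =
  mx2 (a * a' + b * c') (a * b' + b * d') (c * a' + d * c') (c * b' + d * d').
Proof.
apply/matrixP => i j; rewrite !mxE !big_ord_recl big_ord0 !mxE addr0.
by case: i j => [[|[|//]] ?] [[|[|//]] ?].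
Qed.

Lemma mul_rv2_mx2 x y a b c d :
  rv2 x y *m mx2 a b c d = rv2 (x * a + y * c) (x * b + y * d).
Proof.
apply/matrixP => i j; rewrite !mxE !big_ord_recl big_ord0 !mxE addr0.
by case: j => [[|[|//]] ?].
Qed.

Lemma rv2_dot x y s t : (rv2 x y *m (rv2 s t)^T) 0 0 = x * s + y * t.
Proof. by rewrite !mxE !big_ord_recl big_ord0 !mxE addr0. Qed.

Lemma mxtrace_mx2 a b c d : \tr (mx2 a b c d) = a + d.
Proof. by rewrite /mxtrace !big_ord_recl big_ord0 !mxE addr0. Qed.

Lemma mx2_eq0 a b c d :
  (mx2 a b c d == 0) = [&& a == 0, b == 0, c == 0 & d == 0].
Proof.
apply/eqP/and4P => [/matrixP E | [/eqP-> /eqP-> /eqP-> /eqP->]].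
  by split; apply/eqP; [move: (E 0 0) | move: (E 0 1) | move: (E 1 0) | move: (E 1 1)];
     rewrite !mxE.
by apply/matrixP => i j; rewrite !mxE; do 2!case: ifP.
Qed.

Lemma rv2_eq0 x y : (rv2 x y == 0) = (x == 0) && (y == 0).
Proof.
apply/eqP/andP => [/matrixP E | [/eqP-> /eqP->]].
  by split; apply/eqP; [move: (E 0 0) | move: (E 0 1)]; rewrite !mxE.
by apply/matrixP => i j; rewrite !mxE; case: ifP.
Qed.

Lemma adj_mx2 a b c d : \adj (mx2 a b c d) = mx2 d (- b) (- c) a.
Proof.
apply/matrixP => i j; rewrite !mxE /cofactor det_mx11 !mxE.
by case: i j => [[|[|//]] ?] [[|[|//]] ?] /=;
  rewrite ?add0n ?addn0 ?addn1 ?(expr0, expr1, expr2) ?mulN1r ?opprK ?mul1r.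
Qed.

Lemma adj_mx2_eq0 (M : 'M[F]_2) : \adj M = 0 -> M = 0.
Proof.
rewrite [M]mx2E adj_mx2 => /eqP; rewrite !mx2_eq0 !oppr_eq0.
by case/and4P => /eqP-> /eqP-> /eqP-> /eqP->; apply/eqP; rewrite mx2_eq0 eqxx.
Qed.

End TwoByTwo.

Section MatmulTensor.
Variable F : fieldType.
Implicit Types A B X Y Z : 'M[F]_2.

(* [X] and [Y] are rank one, built from [p] and [g] so that they lie in the
   two hyperplanes, and [tr (X Y Z) = (g B A p^T) (g Z p^T)]. *)
Lemma trace3_restrict_eq0 A B Z : B *m A != 0 ->
  (forall X Y, \tr (A *m X) = 0 -> \tr (B *m Y) = 0 -> \tr (X *m Y *m Z) = 0) ->
  Z = 0.
Proof.
move=> nzBA H.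
have [BA0 | //] : B *m A = 0 \/ Z = 0; last by rewrite BA0 eqxx in nzBA.
apply: bilinear_mul_eq0 => g p.
pose v0 := A 0 0 * p 0 0 + A 0 1 * p 0 1; pose v1 := A 1 0 * p 0 0 + A 1 1 * p 0 1.
pose w0 := g 0 0 * B 0 0 + g 0 1 * B 1 0; pose w1 := g 0 0 * B 0 1 + g 0 1 * B 1 1.
pose X := mx2 (p 0 0 * v1) (- (p 0 0 * v0)) (p 0 1 * v1) (- (p 0 1 * v0)).
pose Y := mx2 (w1 * g 0 0) (w1 * g 0 1) (- (w0 * g 0 0)) (- (w0 * g 0 1)).
have AX : \tr (A *m X) = 0 by rewrite [A]mx2E /X /v0 /v1 mulmx2 mxtrace_mx2; ring.
have BY : \tr (B *m Y) = 0 by rewrite [B]mx2E /Y /w0 /w1 mulmx2 mxtrace_mx2; ring.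
transitivity (\tr (X *m Y *m Z)); last exact: H.
rewrite [g]rv2E [p]rv2E [A]mx2E [B]mx2E [Z]mx2E !mulmx2 !mul_rv2_mx2 !rv2_dot mxtrace_mx2.
by rewrite /X /Y /v0 /v1 /w0 /w1; ring.
Qed.

(* Evaluated on the witnesses below, the vanishing 2x2 minors of the rank-one
   form force [tr (adj (B A) Z)] to square to zero. *)
Lemma trace3_restrict_rank1 A B Z (f g : 'M[F]_2 -> F) :
  (forall X Y, \tr (A *m X) = 0 -> \tr (B *m Y) = 0 -> \tr (X *m Y *m Z) = f X * g Y) ->
  \tr (\adj (B *m A) *m Z) = 0.
Proof.
move=> H.
have minor X X' Y Y' : \tr (A *m X) = 0 -> \tr (A *m X') = 0 ->
    \tr (B *m Y) = 0 -> \tr (B *m Y') = 0 ->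
    \tr (X *m Y *m Z) * \tr (X' *m Y' *m Z) = \tr (X *m Y' *m Z) * \tr (X' *m Y *m Z).
  by move=> AX AX' BY BY'; rewrite !H //; ring.
have sq0 (x : F) : x * x = 0 -> x = 0 by move/eqP; rewrite mulf_eq0 orbb => /eqP.
pose X0 := mx2 (A 0 1) 0 (- A 0 0) 0; pose X1 := mx2 0 (A 1 1) 0 (- A 1 0).
pose Xc := mx2 (A 1 1) (A 0 1) (- A 1 0) (- A 0 0).
pose Y0 := mx2 (B 1 0) (- B 0 0) 0 0; pose Y1 := mx2 0 0 (B 1 1) (- B 0 1).
pose Yc := mx2 (B 1 1) (- B 0 1) (B 1 0) (- B 0 0).
have AX0 : \tr (A *m X0) = 0 by rewrite [A]mx2E mulmx2 mxtrace_mx2; ring.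
have AX1 : \tr (A *m X1) = 0 by rewrite [A]mx2E mulmx2 mxtrace_mx2; ring.
have AXc : \tr (A *m Xc) = 0 by rewrite [A]mx2E mulmx2 mxtrace_mx2; ring.
have BY0 : \tr (B *m Y0) = 0 by rewrite [B]mx2E mulmx2 mxtrace_mx2; ring.
have BY1 : \tr (B *m Y1) = 0 by rewrite [B]mx2E mulmx2 mxtrace_mx2; ring.
have BYc : \tr (B *m Yc) = 0 by rewrite [B]mx2E mulmx2 mxtrace_mx2; ring.
set n00 := \tr (X0 *m Y0 *m Z); set n11 := \tr (X1 *m Y1 *m Z).
set n01 := \tr (X1 *m Yc *m Z); set n10 := \tr (X0 *m Yc *m Z).
have t01 : \tr (X0 *m Y1 *m Z) = 0 by rewrite [Z]mx2E !mulmx2 mxtrace_mx2; ring.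
have t10 : \tr (X1 *m Y0 *m Z) = 0 by rewrite [Z]mx2E !mulmx2 mxtrace_mx2; ring.
have tc0 : \tr (Xc *m Y0 *m Z) = n01 by rewrite /n01 [Z]mx2E !mulmx2 !mxtrace_mx2; ring.
have tc1 : \tr (Xc *m Y1 *m Z) = n10 by rewrite /n10 [Z]mx2E !mulmx2 !mxtrace_mx2; ring.
have tcc : \tr (Xc *m Yc *m Z) = n00 + n11.
  by rewrite /n00 /n11 [Z]mx2E !mulmx2 !mxtrace_mx2; ring.
have -> : \tr (\adj (B *m A) *m Z) = n00 + n11.
  by rewrite /n00 /n11 [A]mx2E [B]mx2E [Z]mx2E !mulmx2 adj_mx2 !mulmx2 !mxtrace_mx2; ring.
have n10_0 : n10 = 0.
  apply: sq0; have := minor _ _ _ _ AX0 AXc BY1 BYc.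
  by rewrite t01 tc1 mul0r -/n10.
have n01_0 : n01 = 0.
  apply: sq0; have := minor _ _ _ _ AX1 AXc BY0 BYc.
  by rewrite t10 tc0 mul0r -/n01.
apply: sq0; rewrite mulrDl.
have := minor _ _ _ _ AX0 AXc BY0 BYc; rewrite tcc tc0 -/n00 -/n10 => ->.
have := minor _ _ _ _ AX1 AXc BY1 BYc; rewrite tcc tc1 -/n11 -/n01 => ->.
by rewrite n10_0 n01_0 !mul0r addr0.
Qed.

Lemma trace3_restrict_rank_gt4 A B (P Q R : 'I_4 -> 'M[F]_2) : B *m A != 0 ->
  ~ (forall X Y Z, \tr (A *m X) = 0 -> \tr (B *m Y) = 0 ->
       \tr (X *m Y *m Z) = \sum_(k < 4) \tr (P k *m X) * \tr (Q k *m Y) * \tr (R k *m Z)).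
Proof.
move=> nzBA H.
pose G : 'M[F]_(2 * 2) := \matrix_(t, k) (mxvec (R k)^T)^T t 0.
have GE Z k : (mxvec Z *m G) 0 k = \tr (R k *m Z).
  by rewrite mxtrace_mul_mxvec !mxE; apply: eq_bigr => t _; rewrite !mxE.
suff : (mxvec (\adj (B *m A))^T)^T = 0.
  move/(congr1 trmx); rewrite trmxK trmx0 => /eqP; rewrite mxvec_eq0 -trmx0.
  by move/eqP/trmx_inj/adj_mx2_eq0/eqP; rewrite (negbTE nzBA).
apply: (form_eq0_on_dual_lines (G := G)) => [v vG | k v vG].
  rewrite -[v]vec_mxK; suff -> : vec_mx v = 0 by rewrite linear0.
  apply: (trace3_restrict_eq0 nzBA) => X Y AX BY; rewrite H // big1 // => k _.
  by rewrite -GE vec_mxK vG mxE mulr0.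
apply: mx11_eq0; rewrite -[v]vec_mxK -mxtrace_mul_mxvec.
apply: (trace3_restrict_rank1 (f := fun X => \tr (P k *m X) * \tr (R k *m vec_mx v)))
  => X Y AX BY.
rewrite H // (bigD1 k) //= big1 ?addr0 => [|j jk]; first by rewrite mulrAC.
by rewrite -GE vec_mxK vG // mulr0.
Qed.

(* If [V i U j = 0] for all [j != i], a rank-one [X] in the common kernel of
   the forms [tr (U j _)] shows [V i U i = 0] too, and then [V i = 0]. *)
Lemma exists_cross_mul_neq0 r (U V : 'I_r -> 'M[F]_2) i :
  (forall X, (forall j, \tr (U j *m X) = 0) -> X = 0) -> V i != 0 ->
  exists i' j, i' != j /\ V i' *m U j != 0.
Proof.
move=> kerU nzVi.
case/boolP: [exists i', exists j, (i' != j) && (V i' *m U j != 0)].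
  by case/existsP => i' /existsP[j /andP[]]; exists i', j.
move/existsPn/(_ i)/existsPn => cross0.
have VU j : j != i -> V i *m U j = 0.
  by move=> ji; move: (cross0 j); rewrite eq_sym ji negbK => /eqP.
have VUi : V i *m U i = 0.
  have [// | Vi0] : V i *m U i = 0 \/ V i = 0; last by rewrite Vi0 eqxx in nzVi.
  apply: mulmx_cover_eq0 => q.
  pose v0 := (q *m (V i *m U i)) 0 0; pose v1 := (q *m (V i *m U i)) 0 1.
  pose w0 := q 0 0 * V i 0 0 + q 0 1 * V i 1 0.
  pose w1 := q 0 0 * V i 0 1 + q 0 1 * V i 1 1.
  pose X := mx2 (v1 * w0) (v1 * w1) (- (v0 * w0)) (- (v0 * w1)).
  have trUX j : \tr (U j *m X) =
      (q *m (V i *m U j)) 0 0 * v1 - (q *m (V i *m U j)) 0 1 * v0.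
    rewrite [U j]mx2E /X /w0 /w1 mulmx2 mxtrace_mx2.
    by rewrite [q]rv2E [V i]mx2E mulmx2 mul_rv2_mx2 !mxE /=; ring.
  have /eqP : X = 0.
    apply: kerU => j; rewrite trUX.
    have [-> | ji] := eqVneq j i; first by rewrite -/v0 -/v1 (mulrC v0) subrr.
    by rewrite VU // mulmx0 !mxE !mul0r subr0.
  have -> : q *m (V i *m U i) = rv2 v0 v1 by exact: rv2E.
  have -> : q *m V i = rv2 w0 w1 by rewrite [q]rv2E [V i]mx2E mul_rv2_mx2.
  rewrite mx2_eq0 !oppr_eq0 !mulf_eq0 => cases.
  suff : (rv2 v0 v1 == 0) || (rv2 w0 w1 == 0) by case/orP => /eqP ->; [left | right].
  move: cases; rewrite !rv2_eq0.
  by case: (v0 == 0); case: (v1 == 0); case: (w0 == 0); case: (w1 == 0).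
case/eqP: nzVi; rewrite -[V i]mul1mx; apply: kerU => j.
have VUj : V i *m U j = 0 by have [-> | /VU] := eqVneq j i.
by rewrite mxtrace_mulC -mulmxA VUj mulmx0 mxtrace0.
Qed.

Lemma matmul2_decomp_length_ge7 r (U V W : 'I_r -> 'M[F]_2) :
  (forall X Y Z, \tr (X *m Y *m Z) =
     \sum_(j < r) \tr (U j *m X) * \tr (V j *m Y) * \tr (W j *m Z)) ->
  (7 <= r)%N.
Proof.
move=> D.
have kerU X : (forall j, \tr (U j *m X) = 0) -> X = 0.
  move=> UX; apply: mxtrace_mul_eq0 => Y; rewrite -[X *m Y]mulmx1 D big1 // => j _.
  by rewrite UX !mul0r.
have [i nzVi] : exists i, V i != 0.
  case/boolP: [exists i, V i != 0] => [/existsP // | /existsPn V0].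
  have : (1 : 'M[F]_2) = 0.
    apply: mxtrace_mul_eq0 => Y; rewrite -[1 *m Y]mulmx1 D big1 // => j _.
    by move/negPn/eqP: (V0 j) => ->; rewrite mul0mx mxtrace0 mulr0 mul0r.
  by move/eqP; rewrite oner_eq0.
have [i' [j [ij nzVU]]] := exists_cross_mul_neq0 kerU nzVi.
rewrite leqNgt; apply/negP => r_lt7.
pose S := ~: [set i'; j].
have cardS : (#|S| <= 4)%N by rewrite cardsCs setCK card_ord cards2 ij leq_subLR.
pose pad (M : 'I_r -> 'M[F]_2) (t : 'I_4) :=
  if (t < #|S|)%N then M (nth i' (enum S) t) else 0.
apply: (trace3_restrict_rank_gt4 (P := pad U) (Q := pad V) (R := pad W) nzVU).
move=> X Y Z UX VY; rewrite D (bigD1 i') //= VY mulr0 mul0r add0r.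
rewrite (bigD1 j) /= ?(eq_sym j) // UX !mul0r add0r.
rewrite (eq_bigl [in S]) => [|k]; last by rewrite !inE negb_or.
rewrite (big_enum_pad i' _ cardS); apply: eq_bigr => t _; rewrite /pad.
by case: ifP => _; rewrite ?mul0mx ?mxtrace0 ?mul0r ?mulr0.
Qed.
End MatmulTensor.

Lemma contract_decomp (F : fieldType) (IA IB IC : finType) (T : tensor3 F IA IB IC)
    r (a : 'I_r -> IA -> F) (b : 'I_r -> IB -> F) (c : 'I_r -> IC -> F)
    (f : IA -> F) (g : IB -> F) (h : IC -> F) :
  (forall x y z, T x y z = \sum_(j < r) a j x * b j y * c j z) ->
  \sum_x \sum_y \sum_z T x y z * (f x * g y * h z) =
  \sum_(j < r) (\sum_x a j x * f x) * (\sum_y b j y * g y) * (\sum_z c j z * h z).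
Proof.
move=> D; symmetry.
transitivity (\sum_(j < r) \sum_x \sum_y \sum_z a j x * b j y * c j z * (f x * g y * h z)).
  apply: eq_bigr => j _; rewrite !mulr_suml; apply: eq_bigr => x _.
  rewrite [X in X * _]mulr_sumr mulr_suml; apply: eq_bigr => y _.
  by rewrite mulr_sumr; apply: eq_bigr => z _; ring.
rewrite exchange_big; apply: eq_bigr => x _; rewrite exchange_big; apply: eq_bigr => y _.
by rewrite exchange_big; apply: eq_bigr => z _; rewrite D mulr_suml.
Qed.

Lemma sum_pair (R : nmodType) (I J : finType) (g : I * J -> R) :
  \sum_x g x = \sum_i \sum_j g (i, j).
Proof. by rewrite pair_bigA; apply: eq_bigr => -[]. Qed.

Lemma mxtrace_mulE (F : fieldType) n (G X : 'M[F]_n) :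
  \tr (G *m X) = \sum_i \sum_j G i j * X j i.
Proof. by apply: eq_bigr => i _; rewrite mxE. Qed.

(* Party [A] holds indices [(k, i)], [B] holds [(k, l)] and [C] holds [(i, l)],
   so [Phi3] is the tensor of [tr (X Y Z) = sum X_ik Y_kl Z_li]. *)
Lemma Phi3_contract (X Y Z : 'M[C]_2) :
  \sum_x \sum_y \sum_z Phi3 x y z * (X x.2 x.1 * Y y.1 y.2 * Z z.2 z.1) =
  \tr (X *m Y *m Z).
Proof.
rewrite /mxtrace !(sum_pair, big_ord_recl, big_ord0, mxE) /Phi3 /Phi /=; ring.
Qed.

Lemma Phi3_decomp_trace r : has_decomp Phi3 r ->
  exists U V W : 'I_r -> 'M[C]_2, forall X Y Z,
    \tr (X *m Y *m Z) = \sum_(j < r) \tr (U j *m X) * \tr (V j *m Y) * \tr (W j *m Z).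
Proof.
move=> [a [b [c D]]].
exists (fun j => \matrix_(i, k) a j (i, k)), (fun j => \matrix_(i, k) b j (k, i)),
  (fun j => \matrix_(i, k) c j (i, k)) => X Y Z.
rewrite -Phi3_contract (contract_decomp _ _ _ D); apply: eq_bigr => j _.
rewrite !mxtrace_mulE !sum_pair; congr (_ * _ * _); last first.
- by do 2!apply: eq_bigr => ? _; rewrite mxE.
- by rewrite exchange_big; do 2!apply: eq_bigr => ? _; rewrite mxE.
- by do 2!apply: eq_bigr => ? _; rewrite mxE.
Qed.

(* Strassen's algorithm: the [m]-th product is
   [(sum_ij strassen_a m i j * A_ij) * (sum_ij strassen_b m i j * B_ij)], and
   [strassen_c m i j] is its coefficient in [(A B)_ij]. *)
Definition strassen_a (m i j : nat) : C :=
  match m, i, j with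
  | 0, 0, 0 | 0, 1, 1 | 1, 1, 0 | 1, 1, 1 | 2, 0, 0 | 3, 1, 1
  | 4, 0, 0 | 4, 0, 1 | 5, 1, 0 | 6, 0, 1 => 1
  | 5, 0, 0 | 6, 1, 1 => -1
  | _, _, _ => 0
  end.

Definition strassen_b (m i j : nat) : C :=
  match m, i, j with
  | 0, 0, 0 | 0, 1, 1 | 1, 0, 0 | 2, 0, 1 | 3, 1, 0 | 4, 1, 1
  | 5, 0, 0 | 5, 0, 1 | 6, 1, 0 | 6, 1, 1 => 1
  | 2, 1, 1 | 3, 0, 0 => -1
  | _, _, _ => 0
  end.

Definition strassen_c (m i j : nat) : C :=
  match m, i, j with
  | 0, 0, 0 | 0, 1, 1 | 1, 1, 0 | 2, 0, 1 | 2, 1, 1 | 3, 0, 0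
  | 3, 1, 0 | 4, 0, 1 | 5, 1, 1 | 6, 0, 0 => 1
  | 1, 1, 1 | 4, 0, 0 => -1
  | _, _, _ => 0
  end.

Lemma Phi3_decomp7 : has_decomp Phi3 7.
Proof.
exists (fun (m : 'I_7) (x : qq) => strassen_a m x.2 x.1),
  (fun (m : 'I_7) (y : qq) => strassen_b m y.1 y.2),
  (fun (m : 'I_7) (z : qq) => strassen_c m z.1 z.2).
move=> [x1 x2] [y1 y2] [z1 z2]; rewrite !big_ord_recl big_ord0 /Phi3 /Phi /=.
by case: x1 => [[|[|?]] ?] //; case: x2 => [[|[|?]] ?] //;
   case: y1 => [[|[|?]] ?] //; case: y2 => [[|[|?]] ?] //;
   case: z1 => [[|[|?]] ?] //; case: z2 => [[|[|?]] ?] //=; ring.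
Qed.

Theorem lemma1 : tensor_rank_is Phi3 7.
Proof.
split=> [|r /Phi3_decomp_trace [U [V [W D]]]]; first exact: Phi3_decomp7.
exact: matmul2_decomp_length_ge7 D.
Qed.
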